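(* Let $G$ be a directed graph with vertex set $V=\{1,\dots,n\}$, let $\Delta<n$ be a positive integer and let $i\ge 1$ be an integer. Let $V'=\{x':x\in V\}$ and $V''=\{x'':x\in V\}$ be two disjoint copies of $V$, and let $G_i$ be the graph with vertex set $V\cup V'\cup V''$ and edge set consisting of: $xy$ and $x'y''$ for every $xy\in E(G)$, and $xx'$ for every $x\in V$ with $x\in[(i-1)\Delta+1,\,i\Delta]$. Then for any $u,v\in V$ with $u\neq v$, a $u\to v''$ path exists in $G_i$ if and only if there exists a $u\to v$ path $P$ in $G$ whose last edge $yv$ satisfies $y\in[(i-1)\Delta+1,\,i\Delta]$. *)

From mathcomp Require Import all_boot.
Set Implicit Arguments. Unset Strict Implicit. Unset Printing Implicit Defensive.

(* A directed graph on V = {1,...,n} is an edge relation on 'I_n;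
   the ordinal x : 'I_n stands for the vertex labelled x+1. *)

Definition in_block (n D i : nat) (x : 'I_n) : bool :=
  ((i - 1) * D + 1 <= x.+1 <= i * D)%N.

Definition Gvert (n : nat) : Type := (('I_n + 'I_n) + 'I_n)%type.
Definition vo {n} (x : 'I_n) : Gvert n := inl (inl x).
Definition vp {n} (x : 'I_n) : Gvert n := inl (inr x).
Definition vpp {n} (x : 'I_n) : Gvert n := inr x.

Definition Gi_rel (n D i : nat) (G : rel 'I_n) : Gvert n -> Gvert n -> bool :=
  fun a b =>
    match a, b with
    | inl (inl x), inl (inl y) => G x y
    | inl (inr x), inr y => G x y
    | inl (inl x), inl (inr y) => (x == y) && in_block D i x
    | _, _ => false
    end.

Definition has_path (T : eqType) (e : rel T) (u v : T) : Prop :=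
  exists p : seq T, path e u p && (last u p == v).

From mathcomp Require Import all_boot.

Set Implicit Arguments.
Unset Strict Implicit.
Unset Printing Implicit Defensive.

(** A walk in [G_i] stays in the copy [V] until it crosses a bridge [y y']
    with [y] in the block, the only edges out of [V'] are the edges
    [y' v''] copying the edges [y v] of [G], and [V''] is a sink.  Hence a
    [u -> v''] walk is a [G]-walk [u -> y] inside [V], followed by [y y']
    and [y' v'']: exactly a [G]-walk [u -> v] whose last edge starts in the
    block. *)

Section LayeredPaths.

Variables (n D i : nat) (G : rel 'I_n).

Local Notation Gi := (Gi_rel D i G).

Lemma path_map_vo (a : 'I_n) (q : seq 'I_n) :
  path Gi (vo a) (map vo q) = path G a q.
Proof. by elim: q a => [|b q IH] a //=; rewrite IH. Qed.

Lemma last_map_vo (a : 'I_n) (q : seq 'I_n) :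
  last (vo a) (map vo q) = vo (last a q).
Proof. by elim: q a => [|b q IH] a //=. Qed.

Lemma path_vpp (x : 'I_n) (p : seq (Gvert n)) :
  path Gi (vpp x) p = (p == [::]).
Proof. by case: p. Qed.

Lemma path_vp_to_vpp (x v : 'I_n) (p : seq (Gvert n)) :
  path Gi (vp x) p -> last (vp x) p = vpp v -> G x v.
Proof.
case: p => [|b p] //=; case: b => [[y|y]|y] //=.
by rewrite path_vpp => /andP[Gxy /eqP->] [<-].
Qed.

Lemma path_vo_to_vpp (a v : 'I_n) (p : seq (Gvert n)) :
  path Gi (vo a) p -> last (vo a) p = vpp v ->
  exists q, path G a (rcons q v) /\ in_block D i (last a q).
Proof.
elim: p a => [|b p IH] a //=; case: b => [[b|b]|b] //= /andP[Gi_ab path_b] last_p.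
- have [q [path_q block_q]] := IH b path_b last_p.
  by exists (b :: q); rewrite /= Gi_ab path_q.
- case/andP: Gi_ab => /eqP-> block_b.
  by exists [::]; rewrite /= (path_vp_to_vpp path_b last_p).
Qed.

Lemma path_bridge_to_vpp (u v : 'I_n) (q : seq 'I_n) :
  path G u (rcons q v) -> in_block D i (last u q) ->
  has_path Gi (vo u) (vpp v).
Proof.
rewrite rcons_path => /andP[path_q G_last_v] block_last.
exists (map vo q ++ [:: vp (last u q); vpp v]).
by rewrite cat_path last_cat path_map_vo last_map_vo /= !eqxx block_last path_q G_last_v.
Qed.

End LayeredPaths.

Theorem lemma6 (n D i : nat) (G : rel 'I_n) (u v : 'I_n) :
  (0 < D)%N -> (D < n)%N -> (1 <= i)%N -> u != v ->
  has_path (Gi_rel D i G) (vo u) (vpp v) <->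
  exists (p : seq 'I_n),
    path G u (rcons p v) /\ in_block D i (last u p).
Proof.
move=> _ _ _ _; split.
- by case=> p /andP[path_p /eqP last_p]; exact: path_vo_to_vpp path_p last_p.
- by case=> q [path_q block_q]; exact: path_bridge_to_vpp path_q block_q.
Qed.
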